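(* Let $N\ge1$, $D>0$, $b_1,\dots,b_N>0$, $0<r_1<\cdots<r_N$, and let $k_0$ be as in the context. For integers $k\ge k_0$ let $p^k\pm iq^k$ ($p^k,q^k\in\mathbb R$, $q^k>0$) be the two non-real roots of $P_N^k$. Then there are constants $M_2,M_3>0$ independent of $k$ such that for all sufficiently large $k\ge k_0$, $$\Big|p^k+\frac{1}{2D}\sum_{j=1}^N b_j\Big|\le\frac{M_2}{k^2},\qquad \big|q^k-(2k-1)\sqrt D\big|\le \frac{M_3}{2k-1}.$$
   Context: Standing assumptions: $N\in\mathbb N$, $D>0$, $b_i>0$, $0<r_1<\cdots<r_N$. $P_N^k(\lambda)=\big(D+\frac{\lambda^2}{(2k-1)^2}\big)\prod_{j=1}^N(\lambda+r_j)-\sum_{i=1}^N b_i\prod_{j\neq i}(\lambda+r_j)$ for $k\in\mathbb N$, a real polynomial of degree $N+2$. $k_0$ is a threshold such that for all integers $k\ge k_0$, $P_N^k$ has exactly $N$ real roots, all simple, interlacing with $-r_N<a_N^k<-r_{N-1}<\cdots<-r_1<a_1^k$, and its two remaining roots are simple non-real complex conjugates. *)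

From HB Require Import structures.
From mathcomp Require Import all_boot all_order all_algebra.
From mathcomp Require Import reals.
From mathcomp Require Import complex.
Set Implicit Arguments. Unset Strict Implicit. Unset Printing Implicit Defensive.
Import Order.TTheory GRing.Theory Num.Theory.
Local Open Scope ring_scope.

(* P_N^k(X) = (D + X^2/(2k-1)^2) * prod_j (X + r_j) - sum_i b_i prod_{j<>i} (X + r_j),
   a real polynomial; indices 1..N are represented by 'I_N. *)
Definition PNk (R : realType) (N : nat) (D : R) (b r : 'I_N -> R) (k : nat)
  : {poly R} :=
  (D%:P + ((2 * k)%:R - 1) ^- 2 *: 'X^2) * \prod_(j < N) ('X + (r j)%:P)
  - \sum_(i < N) b i *: \prod_(j < N | j != i) ('X + (r j)%:P).

From HB Require Import structures.
From mathcomp Require Import all_boot all_order all_algebra.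
From mathcomp Require Import reals complex ring lra.
Set Implicit Arguments. Unset Strict Implicit. Unset Printing Implicit Defensive.
Import Order.TTheory GRing.Theory Num.Theory.
Local Open Scope ring_scope.

(* Let z = p + i q be a non-real root and e = (2k - 1)^-2.  Dividing P(z) = 0 by
   prod_j (z + r_j) gives the secular equation D + e z^2 = sum_i b_i / (z + r_i).  With the
   positive weights w_i = b_i / |z + r_i|^2 its imaginary part reads 2 e p = - sum_i w_i, and
   its real part then gives e |z|^2 = D + O(e).  So |z| is of order e^(-1/2), hence
   e |z + r_i|^2 = D + O(e), w_i = e b_i / D + O(e^2) and p = - (sum_i w_i) / (2 e)
   = - (sum_i b_i) / (2 D) + O(e); likewise e q^2 = D + O(e), i.e.
   q = (2k - 1) sqrt D + O(1 / (2k - 1)). *)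

Definition secular_poly (F : comNzRingType) (N : nat) (D e : F) (b r : 'I_N -> F)
  : {poly F} :=
  (D%:P + e *: 'X^2) * \prod_(j < N) ('X + (r j)%:P)
  - \sum_(i < N) b i *: \prod_(j < N | j != i) ('X + (r j)%:P).

Section SecularPoly.
Variables (F : fieldType) (N : nat) (D e : F) (b r : 'I_N -> F).

Lemma map_secular_poly (K : fieldType) (f : {rmorphism F -> K}) :
  map_poly f (secular_poly D e b r) = secular_poly (f D) (f e) (f \o b) (f \o r).
Proof.
rewrite /secular_poly rmorphB rmorphM rmorphD rmorph_sum rmorph_prod /=.
rewrite map_polyC map_polyZ map_polyXn.
congr (_ * _ - _); first by apply: eq_bigr => j _; exact: map_polyXaddC.
apply: eq_bigr => i _; rewrite map_polyZ rmorph_prod.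
by congr (_ *: _); apply: eq_bigr => j _; exact: map_polyXaddC.
Qed.

Lemma root_secular_poly z : (forall j, z + r j != 0) ->
  root (secular_poly D e b r) z = (D + e * z ^+ 2 == \sum_i b i / (z + r i)).
Proof.
move=> zr_neq0; pose Q := \prod_(j < N) (z + r j).
have Q_neq0 : Q != 0 by apply/prodf_neq0 => j _.
have prodD1 i : \prod_(j < N | j != i) (z + r j) = Q / (z + r i).
  by rewrite /Q [in RHS](bigD1 i) //= mulrC mulKf.
have hornerXr j : ('X + (r j)%:P).[z] = z + r j by rewrite hornerD hornerX hornerC.
rewrite rootE /secular_poly hornerD hornerM hornerD hornerC hornerZ hornerXn hornerN.
rewrite horner_prod horner_sum; under eq_bigr do rewrite hornerXr.
under [\sum_i _]eq_bigr do rewrite hornerZ horner_prod (eq_bigr _ (fun j _ => hornerXr j)) prodD1 mulrCA.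
by rewrite -/Q -mulr_sumr mulrC -mulrBr mulf_eq0 (negbTE Q_neq0) subr_eq0.
Qed.

End SecularPoly.

Lemma PNkE (R : realType) (N : nat) (D : R) (b r : 'I_N -> R) (k : nat) :
  PNk D b r k = secular_poly D (((2 * k)%:R - 1) ^- 2) b r.
Proof. by []. Qed.

Section ComplexRoots.
Local Open Scope complex_scope.
Variable R : rcfType.

Lemma sum_complex (I : finType) (x y : I -> R) :
  \sum_i (x i +i* y i) = (\sum_i x i) +i* (\sum_i y i).
Proof. by apply: (big_rec3 (fun (s : R[i]) a b => s = a +i* b)) => // i s a c _ ->. Qed.

Variables (N : nat) (D e p q : R) (b r : 'I_N -> R).
Hypothesis q_neq0 : q != 0.

Lemma secular_eq_re_im :
  D%:C + e%:C * (p +i* q) ^+ 2 = \sum_i (b i)%:C / (p +i* q + (r i)%:C) ->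
  D + e * (p ^+ 2 - q ^+ 2)
    = \sum_i b i / ((p + r i) ^+ 2 + q ^+ 2) * (p + r i) /\
  2 * e * p = - \sum_i b i / ((p + r i) ^+ 2 + q ^+ 2).
Proof.
pose w i := b i / ((p + r i) ^+ 2 + q ^+ 2).
have term i : (b i)%:C / (p +i* q + (r i)%:C) = (w i * (p + r i)) +i* (- (w i * q)).
  by congr (_ +i* _) => /=; rewrite addr0 /w; ring.
rewrite (eq_bigr _ (fun i _ => term i)) sum_complex.
have -> : D%:C + e%:C * (p +i* q) ^+ 2 = (D + e * (p ^+ 2 - q ^+ 2)) +i* (e * (2 * p * q)).
  by rewrite expr2; congr (_ +i* _) => /=; ring.
case=> re im; split=> //; apply: (mulIf q_neq0).
by rewrite mulNr mulr_suml -sumrN -im; ring.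
Qed.

Lemma root_secular_poly_re_im :
  root (map_poly (real_complex R) (secular_poly D e b r)) (p +i* q) ->
  D + e * (p ^+ 2 - q ^+ 2)
    = \sum_i b i / ((p + r i) ^+ 2 + q ^+ 2) * (p + r i) /\
  2 * e * p = - \sum_i b i / ((p + r i) ^+ 2 + q ^+ 2).
Proof.
rewrite map_secular_poly root_secular_poly => [/eqP|j]; first exact: secular_eq_re_im.
by rewrite eq_complex /= addr0 negb_and q_neq0 orbT.
Qed.

End ComplexRoots.

Section NonrealRootBounds.
Variables (R : realFieldType) (N : nat) (D e p q X : R) (b r : 'I_N -> R).
Hypotheses (D_gt0 : 0 < D) (e_gt0 : 0 < e) (q_gt0 : 0 < q).
Hypotheses (b_gt0 : forall i, 0 < b i) (r_gt0 : forall i, 0 < r i).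
Hypotheses (r_leX : forall i, r i <= X) (X_ge0 : 0 <= X) (eX2_small : 8 * e * X ^+ 2 <= D).

Local Notation n i := ((p + r i) ^+ 2 + q ^+ 2).
Local Notation w i := (b i / n i).
Local Notation B := (\sum_i b i).
Local Notation P := (4 * B / D).
Local Notation C := (8 * B / D + X).

Hypotheses (re_eq : D + e * (p ^+ 2 - q ^+ 2) = \sum_i w i * (p + r i))
           (im_eq : 2 * e * p = - \sum_i w i).

Let n_gt0 i : 0 < n i.
Proof. by rewrite ltr_pwDr ?exprn_gt0 ?sqr_ge0. Qed.

Let w_gt0 i : 0 < w i.
Proof. by rewrite divr_gt0. Qed.

Let p_le0 : p <= 0.
Proof.
have : 0 <= \sum_i w i by apply: sumr_ge0 => i _; exact: ltW.
by rewrite -oppr_le0 -im_eq pmulr_rle0 ?pmulr_rgt0.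
Qed.

(* by [im_eq], [\sum_i w i * p = - 2 * e * p ^+ 2] *)
Let modulus_eq : e * (p ^+ 2 + q ^+ 2) = D + 4 * e * p ^+ 2 - \sum_i w i * r i.
Proof.
have split_sum : \sum_i w i * (p + r i) = (\sum_i w i) * p + \sum_i w i * r i.
  by rewrite mulr_suml -big_split; apply: eq_bigr => i _; rewrite mulrDr.
move: re_eq; rewrite split_sum -[\sum_i w i]opprK -im_eq; lra.
Qed.

Let sum_wr_bounds : 0 <= \sum_i w i * r i <= - (2 * e * p * X).
Proof.
apply/andP; split; first by apply: sumr_ge0 => i _; rewrite mulr_ge0 ?ltW.
rewrite (_ : - (2 * e * p * X) = (\sum_i w i) * X); last first.
  by rewrite -[\sum_i w i]opprK -im_eq; ring.
rewrite mulr_suml.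
by apply: ler_sum => i _; rewrite ler_wpM2l ?(ltW (w_gt0 i)).
Qed.

Let modulus_lb : D / 2 <= e * (p ^+ 2 + q ^+ 2).
Proof.
have sq_ge0 : 0 <= 16 * e * p ^+ 2 + 8 * e * p * X + e * X ^+ 2.
  by rewrite (_ : _ + _ = e * (4 * p + X) ^+ 2); [rewrite mulr_ge0 ?sqr_ge0 ?ltW | ring].
move: D_gt0 eX2_small; case/andP: sum_wr_bounds => _ hS D0 hX.
by rewrite modulus_eq; lra.
Qed.

Let modulus_ge_X2 : 4 * X ^+ 2 <= p ^+ 2 + q ^+ 2.
Proof.
rewrite -(ler_pM2l e_gt0); move: modulus_lb eX2_small => h1 h2; lra.
Qed.

Let sqr_r_le i : r i ^+ 2 <= X ^+ 2.
Proof. by apply: lerXn2r; rewrite ?nnegrE ?X_ge0 ?r_leX // ltW. Qed.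

(* [|z + r i| >= |z| - r i >= |z| / 2] for [z = p + i q] *)
Let n_lb i : D / 8 <= e * n i.
Proof.
have rX2 := sqr_r_le i.
have hsq := sqr_ge0 (p + 2 * r i); have hq := sqr_ge0 q; have hA := modulus_ge_X2.
have : (p ^+ 2 + q ^+ 2) / 4 <= n i by lra.
move/(ler_wpM2l (ltW e_gt0)); move: modulus_lb => hD; lra.
Qed.

Let w_le i : w i <= 8 * e * b i / D.
Proof.
have : D <= 8 * (e * n i) by move: (n_lb i) => h; lra.
move/(ler_wpM2l (ltW (b_gt0 i))) => h.
by rewrite ler_pdivlMr // mulrAC ler_pdivrMr //; lra.
Qed.

Let sum_w_le : \sum_i w i <= 8 * e * B / D.
Proof. by rewrite mulr_sumr mulr_suml; apply: ler_sum => i _; exact: w_le. Qed.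

Let p_bounds : 0 <= - p <= P.
Proof.
rewrite oppr_ge0 p_le0 /= -(ler_pM2l (_ : 0 < 2 * e)) ?mulr_gt0 //.
by move: sum_w_le im_eq => h1 h2; lra.
Qed.

Let sum_wr_le : \sum_i w i * r i <= 2 * e * X * P.
Proof.
move: sum_wr_bounds p_bounds => /andP[_ hS] /andP[_ hp].
have := ler_wpM2l (mulr_ge0 (ltW e_gt0) X_ge0) hp => h; lra.
Qed.

Let sqr_p_le : p ^+ 2 <= P ^+ 2.
Proof.
case/andP: p_bounds => h0 h1; rewrite -sqrrN.
by apply: lerXn2r; rewrite ?nnegrE ?(le_trans h0 h1).
Qed.

Let P_ge0 : 0 <= P.
Proof. by case/andP: p_bounds; exact: le_trans. Qed.

Let norm_le_C2e y :
  - (4 * e * P * X) <= y <= e * (4 * P ^+ 2 + X ^+ 2) ->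
  `|y| <= C ^+ 2 * e.
Proof.
have e0 := ltW e_gt0; have ePX := mulr_ge0 (mulr_ge0 e0 P_ge0) X_ge0.
have eP2 := mulr_ge0 e0 (sqr_ge0 P); have eX2 := mulr_ge0 e0 (sqr_ge0 X).
by case/andP=> ylb yub; rewrite ler_norml; apply/andP; split; lra.
Qed.

Let n_dev i : `|e * n i - D| <= C ^+ 2 * e.
Proof.
case/andP: p_bounds => p0 pP; case/andP: sum_wr_bounds => S0 _.
have pr_ge0 : 0 <= - p * r i by rewrite mulr_ge0 // ltW.
have pr_le : - p * r i <= P * X by rewrite ler_pM ?r_leX // ltW.
have hp := sqr_p_le; have hr := sqr_r_le i; have hp0 := sqr_ge0 p; have hr0 := sqr_ge0 (r i).
have /andP[Ylb Yub] : - (2 * P * X) <= 4 * p ^+ 2 + 2 * p * r i + r i ^+ 2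
    <= 4 * P ^+ 2 + X ^+ 2 by apply/andP; split; lra.
have h1 := ler_wpM2l (ltW e_gt0) Ylb; have h2 := ler_wpM2l (ltW e_gt0) Yub.
have hS := sum_wr_le; have hn := modulus_eq.
by apply: norm_le_C2e; apply/andP; split; lra.
Qed.

Lemma imag_part_dev : `|e * q ^+ 2 - D| <= C ^+ 2 * e.
Proof.
case/andP: sum_wr_bounds => S0 _; have hS := sum_wr_le; have hn := modulus_eq.
have e0 := ltW e_gt0; have hp := ler_wpM2l e0 sqr_p_le.
have hp0 := mulr_ge0 e0 (sqr_ge0 p); have eX2 := mulr_ge0 e0 (sqr_ge0 X).
have ePX := mulr_ge0 (mulr_ge0 e0 P_ge0) X_ge0.
by apply: norm_le_C2e; apply/andP; split; lra.
Qed.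

(* [B / (2 D)] is the limit of [- p] because [w i ~ e * b i / D] *)
Let real_part_eq : 2 * e * (p + B / (2 * D)) = \sum_i w i * ((e * n i - D) / D).
Proof.
have wn i : w i * ((e * n i - D) / D) = e / D * b i - w i.
  by field; rewrite !lt0r_neq0.
rewrite (eq_bigr _ (fun i _ => wn i)) sumrB -mulr_sumr mulrDr im_eq.
by field; rewrite lt0r_neq0.
Qed.

Lemma real_part_dev : `|p + B / (2 * D)| <= 4 * B * C ^+ 2 / D ^+ 2 * e.
Proof.
have sum_le : `|\sum_i w i * ((e * n i - D) / D)| <= \sum_i 8 * e * b i / D * (C ^+ 2 * e / D).
  apply: le_trans (ler_norm_sum _ _ _) _; apply: ler_sum => i _.
  rewrite normrM (gtr0_norm (w_gt0 i)) normf_div (gtr0_norm D_gt0).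
  apply: ler_pM; [exact: ltW | by rewrite divr_ge0 // ltW | exact: w_le |].
  by rewrite ler_pM2r ?invr_gt0 // n_dev.
rewrite -real_part_eq -mulr_suml -mulr_suml -mulr_sumr normrM gtr0_norm ?mulr_gt0 // in sum_le.
rewrite -(ler_pM2l (_ : 0 < 2 * e)) ?mulr_gt0 //.
rewrite [X in _ <= X](_ : _ = 8 * e * B / D * (C ^+ 2 * e / D)) //.
by field; rewrite lt0r_neq0.
Qed.

End NonrealRootBounds.

Lemma sqrt_dev_le (R : rcfType) (c q D K : R) : 0 < c -> 0 <= q -> 0 < D ->
  `|q ^+ 2 - c ^+ 2 * D| <= K -> `|q - c * Num.sqrt D| <= K / Num.sqrt D / c.
Proof.
move=> c_gt0 q_ge0 D_gt0; have sD_gt0 : 0 < Num.sqrt D by rewrite sqrtr_gt0.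
have -> : q ^+ 2 - c ^+ 2 * D = (q - c * Num.sqrt D) * (q + c * Num.sqrt D).
  by rewrite -[in LHS](sqr_sqrtr (ltW D_gt0)); ring.
have qc_ge0 : 0 <= q + c * Num.sqrt D by rewrite addr_ge0 // mulr_ge0 // ltW.
rewrite normrM (ger0_norm qc_ge0) => h.
rewrite -mulrA -invfM ler_pdivlMr ?mulr_gt0 //; apply: le_trans h.
by rewrite ler_wpM2l // mulrC lerDr.
Qed.

Section ScaledRoots.
Variables (R : rcfType) (N : nat) (D : R) (b r : 'I_N -> R).
Hypotheses (D_gt0 : 0 < D) (b_gt0 : forall i, 0 < b i) (r_gt0 : forall i, 0 < r i).

Local Notation B := (\sum_i b i).
Local Notation X := (\sum_i r i).
Local Notation C := (8 * B / D + X).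

Let X_ge0 : 0 <= X.
Proof. by apply: sumr_ge0 => i _; exact: ltW. Qed.

Let r_leX i : r i <= X.
Proof. by rewrite (bigD1 i) //= lerDl; apply: sumr_ge0 => j _; exact: ltW. Qed.

Lemma nonreal_root_bounds c p q : 0 < c -> 0 < q -> 8 * X ^+ 2 <= D * c ^+ 2 ->
  root (map_poly (real_complex R) (secular_poly D (c ^- 2) b r)) (p +i* q)%C ->
  `|p + B / (2 * D)| <= 4 * B * C ^+ 2 / D ^+ 2 / c ^+ 2 /\
  `|q - c * Num.sqrt D| <= C ^+ 2 / Num.sqrt D / c.
Proof.
move=> c_gt0 q_gt0 c_large root_pq.
have e_gt0 : 0 < c ^- 2 by rewrite invr_gt0 exprn_gt0.
have eX2_small : 8 * c ^- 2 * X ^+ 2 <= D by rewrite mulrAC ler_pdivrMr ?exprn_gt0.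
have [re_eq im_eq] := root_secular_poly_re_im (lt0r_neq0 q_gt0) root_pq.
have p_dev := real_part_dev D_gt0 e_gt0 q_gt0 b_gt0 r_gt0 r_leX X_ge0 eX2_small re_eq im_eq.
have q_dev := imag_part_dev D_gt0 e_gt0 q_gt0 b_gt0 r_gt0 r_leX X_ge0 eX2_small re_eq im_eq.
split=> //; apply: sqrt_dev_le (ltW q_gt0) D_gt0 _ => //.
have c2_neq0 : c ^+ 2 != 0 by rewrite expf_neq0 ?lt0r_neq0.
rewrite -[q ^+ 2](mulVKf c2_neq0) -mulrBr normrM ger0_norm ?sqr_ge0 //.
by rewrite -[X in _ <= X](mulfVK c2_neq0) [X in _ <= X]mulrC ler_wpM2l ?sqr_ge0.
Qed.

End ScaledRoots.

Theorem lemma4p3 (R : realType) (N : nat) (D : R) (b r : 'I_N -> R) :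
  (0 < N)%N -> 0 < D -> (forall i, 0 < b i) -> (forall i, 0 < r i) ->
  (forall i j : 'I_N, (i < j)%N -> r i < r j) ->
  exists M2 M3 : R, 0 < M2 /\ 0 < M3 /\
  exists K : nat, forall k : nat, (K <= k)%N ->
    forall p q : R, 0 < q ->
      root (map_poly (fun x : R => (x%:C)%C) (PNk D b r k)) (p +i* q)%C ->
      `|p + (\sum_(j < N) b j) / (2 * D)| <= M2 / (k%:R ^+ 2) /\
      `|q - ((2 * k)%:R - 1) * Num.sqrt D| <= M3 / ((2 * k)%:R - 1).
Proof.
move=> N_gt0 D_gt0 b_gt0 r_gt0 _.
set B := \sum_(j < N) b j; set X := \sum_(j < N) r j; set C := 8 * B / D + X.
have B_gt0 : 0 < B.
  rewrite /B (bigD1 (Ordinal N_gt0)) //=; apply: ltr_wpDr (b_gt0 _).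
  by apply: sumr_ge0 => j _; exact: ltW.
have C_gt0 : 0 < C by rewrite ltr_pwDl ?divr_gt0 ?mulr_gt0 ?sumr_ge0 // => j _; exact: ltW.
exists (4 * B * C ^+ 2 / D ^+ 2), (C ^+ 2 / Num.sqrt D).
split; first by rewrite !divr_gt0 ?exprn_gt0 ?mulr_gt0.
split; first by rewrite divr_gt0 ?exprn_gt0 ?sqrtr_gt0.
exists (Num.truncn (8 * X ^+ 2 / D)).+1 => k k_large p q q_gt0 root_pq.
have k_gt : 8 * X ^+ 2 < k%:R * D.
  by rewrite -ltr_pdivrMr //; apply: lt_le_trans (truncnS_gt _) _; rewrite ler_nat.
have k_ge1 : 1 <= k%:R :> R by rewrite ler1n; apply: leq_trans k_large.
pose c : R := (2 * k)%:R - 1.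
have c_ge_k : k%:R <= c by rewrite /c natrM; lra.
have c_gt0 : 0 < c by lra.
have c_large : 8 * X ^+ 2 <= D * c ^+ 2.
  have k_le_c2 : k%:R <= c ^+ 2 by rewrite expr2; nra.
  by have := ler_wpM2l (ltW D_gt0) k_le_c2; lra.
rewrite PNkE -/c in root_pq.
have [p_dev q_dev] := nonreal_root_bounds D_gt0 b_gt0 r_gt0 c_gt0 q_gt0 c_large root_pq.
split=> //; apply: le_trans p_dev _; rewrite ler_pM2l ?divr_gt0 ?exprn_gt0 ?mulr_gt0 //.
rewrite lef_pV2 ?posrE ?exprn_gt0 //; last lra.
by apply: lerXn2r; rewrite ?nnegrE // ltW.
Qed.
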